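(* Let $\ell\geq 1$, let $G\subseteq\mathcal{G}_\Sigma^\ell$ be a non-empty finite set of generalized strings of length $\ell$, and let $(Q,\Sigma,\Delta,Q_\alpha,F)=\mathrm{NFA}(G)$. Then for every $s\in\Sigma^*$: there exists $q\in Q_\alpha$ with $\hat\Delta(q,s)\cap F\neq\emptyset$ if and only if there exists $g\in G$ such that $s\vartriangleleft g$.
   Context: For a finite alphabet $\Sigma$, $\mathcal{G}_\Sigma=\mathcal{P}(\Sigma)\setminus\{\emptyset\}$ and a generalized string is a finite string $g=g[1]\cdots g[|g|]$ over $\mathcal{G}_\Sigma$; $\mathcal{G}_\Sigma^\ell$ is the set of generalized strings of length $\ell$. A string $s\in\Sigma^*$ matches $g$, written $s\vartriangleleft g$, if $|s|=|g|$ and $s[i]\in g[i]$ for all $1\le i\le|g|$. Construction of $\mathrm{NFA}(G)$: let $\bar Q=\mathcal{P}(G)\times\{0,\dots,\ell\}$ and define $\mathrm{Parent}:\bar Q\times\Sigma\to\bar Q\cup\{\bot\}$ by $\mathrm{Parent}((H,k),\sigma)=(\{h\in H:\sigma\in h[k]\},k-1)$ if $k>0$ and $\bot$ if $k=0$. Set $Q_\ell=\{(G,\ell)\}$ and, for $i=\ell-1,\dots,0$, $Q_i=\{(H,i): H\subseteq G,\ H\neq\emptyset,\ \exists q\in Q_{i+1},\sigma\in\Sigma \text{ with } \mathrm{Parent}(q,\sigma)=(H,i)\}$. Let $Q=Q_0\cup\dots\cup Q_\ell$, $\Delta((H,k),\sigma)=\{q\in Q_{k+1}:\mathrm{Parent}(q,\sigma)=(H,k)\}$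 if $k<\ell$ and $\emptyset$ if $k=\ell$, $Q_\alpha=Q_0$, $F=Q_\ell$. Then $\mathrm{NFA}(G)=(Q,\Sigma,\Delta,Q_\alpha,F)$. $\hat\Delta$ denotes the extension of $\Delta$ to strings: $\hat\Delta(q,\varepsilon)=\{q\}$, $\hat\Delta(q,\sigma s)=\bigcup_{p\in\Delta(q,\sigma)}\hat\Delta(p,s)$. *)

From mathcomp Require Import all_boot.
Set Implicit Arguments. Unset Strict Implicit. Unset Printing Implicit Defensive.

Section NFA.
Variables (Sigma : finType) (l : nat).

(* A generalized string of length l: an l-tuple of subsets of Sigma
   (non-emptiness of the entries is imposed as a hypothesis, see gstring_ok). *)
Definition gstring := (l.-tuple {set Sigma}).

Definition gstring_ok (g : gstring) : bool :=
  [forall i : 'I_l, tnth g i != set0].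

(* g[k] with 1-based index k (1 <= k <= l) *)
Definition gat (g : gstring) (k : nat) : {set Sigma} := nth set0 g k.-1.

Definition matches (s : seq Sigma) (g : gstring) : bool :=
  (size s == l) && all2 (fun (x : Sigma) (A : {set Sigma}) => x \in A) s (tval g).

Definition state := ({set gstring} * nat)%type.

Definition Parent (q : state) (sigma : Sigma) : option state :=
  if q.2 is k.+1 then Some ([set h in q.1 | sigma \in gat h q.2], k) else None.

(* Qset G j = the set of H such that (H, l - j) \in Q_{l-j} *)
Fixpoint Qset (G : {set gstring}) (j : nat) : {set {set gstring}} :=
  if j is j'.+1 then
    [set H : {set gstring} | (H \subset G) && (H != set0) &&
       [exists H' in Qset G j', exists sigma : Sigma,
          Parent (H', l - j') sigma == Some (H, l - j'.+1)]]
  else [set G].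

(* Q_i, as a set of first components *)
Definition Qlev (G : {set gstring}) (i : nat) : {set {set gstring}} := Qset G (l - i).

Definition inQ (G : {set gstring}) (q : state) : bool :=
  (q.2 <= l) && (q.1 \in Qlev G q.2).

Definition Delta (G : {set gstring}) (q : state) (sigma : Sigma) : seq state :=
  if q.2 < l then
    [seq (H', q.2.+1) | H' <- enum (Qlev G q.2.+1) & Parent (H', q.2.+1) sigma == Some q]
  else [::].

Fixpoint hatDelta (G : {set gstring}) (q : state) (s : seq Sigma) : seq state :=
  if s is sigma :: s' then flatten [seq hatDelta G p s' | p <- Delta G q sigma]
  else [:: q].

Definition initial (G : {set gstring}) (q : state) : bool := (q.2 == 0) && inQ G q.
Definition final (G : {set gstring}) (q : state) : bool := q == (G, l).

End NFA.

From mathcomp Require Import all_boot.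
Set Implicit Arguments. Unset Strict Implicit. Unset Printing Implicit Defensive.

(* A transition on sigma from (H, k) goes to a state (H', k+1) with
   H = {h in H' | sigma in h[k+1]}.  Hence, by induction on the remaining
   input t, a state (H, k) from which t leads to the final state (G, l)
   satisfies k + |t| = l and H = {h in G | t matches h[k+1..l]}; for an
   initial state this set is non-empty, which yields a g in G matched by s.
   Conversely, if s matches g in G, the sets
   H_k = {h in G | s[k+1..l] matches h[k+1..l]} all contain g, so they are
   states of NFA(G), and H_0 -> H_1 -> ... -> H_l = G is an accepting run. *)

Lemma all2_drop (S T : Type) (r : S -> T -> bool) (s : seq S) (t : seq T) k :
  all2 r s t -> all2 r (drop k s) (drop k t).
Proof. by elim: s t k => [|x s IHs] [|y t] [|k] //= /andP[_ /IHs]. Qed.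

Lemma drop_cons (T : Type) (s : seq T) k :
  k < size s -> exists x, drop k s = x :: drop k.+1 s.
Proof.
by elim: s k => [|x s IHs] [|k] //= => [_|/IHs]; first by exists x; rewrite drop0.
Qed.

Section Correctness.
Variables (Sigma : finType) (l : nat) (G : {set gstring Sigma l}).

Notation fits := (fun (x : Sigma) (A : {set Sigma}) => x \in A).

Definition suffix_matchers (t : seq Sigma) (k : nat) : {set gstring Sigma l} :=
  [set h in G | all2 fits t (drop k h)].

Lemma suffix_matchers_nil : suffix_matchers [::] l = G.
Proof.
by apply/setP=> h; rewrite inE drop_oversize ?size_tuple ?andbT.
Qed.

Lemma Qset_neq0 j H : 0 < j -> H \in Qset G j -> H != set0.
Proof. by case: j => //= j _; rewrite inE => /andP[/andP[]]. Qed.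

Lemma Parent_suffix_matchers x (t : seq Sigma) k : k < l ->
  Parent (suffix_matchers t k.+1, k.+1) x = Some (suffix_matchers (x :: t) k, k).
Proof.
move=> lt_kl; congr (Some (_, _)); apply/setP=> h.
rewrite !inE /= [drop k h](drop_nth set0) ?size_tuple //= /gat.
by rewrite -andbA [_ && (x \in _)]andbC.
Qed.

Lemma mem_hatDelta_final (q : state Sigma l) (t : seq Sigma) :
  (G, l) \in hatDelta G q t -> q.2 + size t = l /\ q.1 = suffix_matchers t q.2.
Proof.
elim: t q => [|x t IHt] [H k] /=.
  by rewrite inE => /eqP[<- <-]; rewrite addn0 suffix_matchers_nil.
case/flattenP=> ps /mapP[p]; rewrite /Delta /=; case: ifP => // lt_kl.
case/mapP=> H'; rewrite mem_filter => /andP[/eqP parent_H' _] -> ->.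
case/IHt=> /= size_t def_H'.
move: parent_H'; rewrite def_H' Parent_suffix_matchers // => -[<-].
by rewrite addnS.
Qed.

Section MatchingString.
Variables (s : seq Sigma) (g : gstring Sigma l).
Hypotheses (g_in_G : g \in G) (size_s : size s = l) (g_matched : all2 fits s g).

Lemma suffix_matchers_step k : k < l ->
  exists2 x, drop k s = x :: drop k.+1 s &
    Parent (suffix_matchers (drop k.+1 s) k.+1, k.+1) x
    = Some (suffix_matchers (drop k s) k, k).
Proof.
move=> lt_kl; have [|x drop_k] := drop_cons (s := s) (k := k); first by rewrite size_s.
by exists x; rewrite // Parent_suffix_matchers // -drop_k.
Qed.

Lemma suffix_matchers_in_Qset j :
  j <= l -> suffix_matchers (drop (l - j) s) (l - j) \in Qset G j.
Proof.
elim: j => [_|j IHj lt_jl /=].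
  by rewrite subn0 drop_oversize ?size_s // suffix_matchers_nil inE.
have [|x _ parent_x] := suffix_matchers_step (k := l - j.+1).
  by rewrite subnSK // leq_subr.
rewrite inE -andbA; apply/and3P; split.
- by apply/subsetP=> h; rewrite inE => /andP[].
- by apply/set0Pn; exists g; rewrite inE g_in_G all2_drop.
apply/existsP; exists (suffix_matchers (drop (l - j) s) (l - j)); rewrite IHj 1?ltnW //=.
by apply/existsP; exists x; rewrite -(subnSK lt_jl) parent_x.
Qed.

Lemma suffix_matchers_in_Qlev k : k <= l -> suffix_matchers (drop k s) k \in Qlev G k.
Proof.
by move=> le_kl; rewrite /Qlev -{1 2}(subKn le_kl) suffix_matchers_in_Qset ?leq_subr.
Qed.

Lemma final_in_hatDelta_suffix k :
  k <= l -> (G, l) \in hatDelta G (suffix_matchers (drop k s) k, k) (drop k s).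
Proof.
move=> le_kl; rewrite -(subKn le_kl); elim: (l - k) (leq_subr k l) => [|j IHj] lt_jl.
  by rewrite subn0 drop_oversize ?size_s // suffix_matchers_nil mem_head.
have lt_kl : l - j.+1 < l by rewrite subnSK // leq_subr.
have [x -> parent_x] := suffix_matchers_step lt_kl.
rewrite subnSK //=; apply/flattenP.
exists (hatDelta G (suffix_matchers (drop (l - j) s) (l - j), l - j) (drop (l - j) s)).
  apply: map_f; rewrite /Delta /= lt_kl subnSK //; apply: map_f.
  rewrite mem_filter mem_enum suffix_matchers_in_Qlev ?leq_subr // andbT.
  by rewrite -(subnSK lt_jl) parent_x.
exact/IHj/ltnW.
Qed.

End MatchingString.
End Correctness.

Theorem mainTheorem5 (Sigma : finType) (l : nat) (G : {set gstring Sigma l}) :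
  1 <= l ->
  G != set0 ->
  (forall g, g \in G -> gstring_ok g) ->
  forall s : seq Sigma,
    (exists q : state Sigma l, initial G q /\ has (final G) (hatDelta G q s)) <->
    (exists g, g \in G /\ matches s g).
Proof.
(* Neither G nor the entries of its strings need to be non-empty. *)
move=> l_gt0 _ _ s; split.
- case=> -[H k] [/andP[/eqP /= -> /andP[_ H_in_Q0]] /hasP[q final_reached /eqP def_q]].
  move: final_reached; rewrite def_q => /mem_hatDelta_final[/= size_s def_H].
  move: H_in_Q0; rewrite /Qlev subn0 => /(Qset_neq0 l_gt0)/set0Pn[g].
  rewrite def_H inE drop0 => /andP[g_in_G g_matched].
  by exists g; split=> //; rewrite /matches g_matched andbT; apply/eqP.
- case=> g [g_in_G /andP[/eqP size_s g_matched]].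
  exists (suffix_matchers G s 0, 0); split.
    rewrite /initial /inQ /= -[s in suffix_matchers _ s]drop0.
    exact: (suffix_matchers_in_Qlev g_in_G).
  apply/hasP; exists (G, l); last exact: eqxx.
  rewrite -{2}[s]drop0 -[s in suffix_matchers _ s]drop0.
  exact: (final_in_hatDelta_suffix g_in_G).
Qed.
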